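(* Every WD-algebra $\mathbf A$ is isomorphic to a subalgebra of $\mathcal A(\mathcal F(\mathbf A))$; more precisely, the map $\sigma_{\mathbf A}(a)=\{P\in X(\mathbf A)\colon a\in P\}$ is an injective homomorphism from $\mathbf A$ into $\mathcal A(\mathcal F(\mathbf A))$.
   Context: A WD-algebra is an algebra $(A,\wedge,\vee,\leftarrow,0,1)$ such that $(A,\wedge,\vee,0,1)$ is a bounded distributive lattice and for all $a,b,c\in A$: $a\leftarrow a=0$; $(a\vee b)\leftarrow c=(a\leftarrow c)\vee(b\leftarrow c)$; $a\leftarrow(b\wedge c)=(a\leftarrow b)\vee(a\leftarrow c)$; $a\leftarrow c\le(a\leftarrow b)\vee(b\leftarrow c)$. $X(\mathbf A)$ is the set of prime filters of $\mathbf A$; $S_{\mathbf A}$ is the relation on $X(\mathbf A)$ with $(P,Q)\in S_{\mathbf A}$ iff for all $a,b\in A$, $a\in Q$ and $b\notin Q$ imply $a\leftarrow b\in P$. $\mathcal F(\mathbf A)=(X(\mathbf A),\subseteq,S_{\mathbf A})$. For a structure $\mathcal F=(X,\le,S)$, $\mathcal A(\mathcal F)=(\mathrm{Up}(X),\cap,\cup,\Leftarrow_S,\emptyset,X)$, where $\mathrm{Up}(X)$ is the set of upsets of $(X,\le)$ and $U\Leftarrow_S V=\{x\in X\colon S(x)\cap(U\setminus V)\neq\emptyset\}$ with $S(x)=\{y\colon(x,y)\in S\}$. *)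

From HB Require Import structures.
From mathcomp Require Import all_boot all_order.
Set Implicit Arguments. Unset Strict Implicit. Unset Printing Implicit Defensive.
Import Order.TTheory.
Local Open Scope order_scope.

Section WD.
Context {disp : Order.disp_t} {A : tbDistrLatticeType disp}.

(* The WD-algebra axioms for the extra operation [imp] (written a <- b). *)
Definition WD_axioms (imp : A -> A -> A) : Prop :=
  [/\ (forall a, imp a a = \bot),
      (forall a b c, imp (a `|` b) c = imp a c `|` imp b c),
      (forall a b c, imp a (b `&` c) = imp a b `|` imp a c)
    & (forall a b c, imp a c <= imp a b `|` imp b c)].

Definition prime_filter (P : A -> Prop) : Prop :=
  [/\ P \top,
      (forall a b, a <= b -> P a -> P b),
      (forall a b, P a -> P b -> P (a `&` b)),
      ~ P \bot
    & (forall a b, P (a `|` b) -> P a \/ P b)].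

Definition primeX := {P : A -> Prop | prime_filter P}.

Definition X_le (P Q : primeX) : Prop := forall a, proj1_sig P a -> proj1_sig Q a.

Definition S_rel (imp : A -> A -> A) (P Q : primeX) : Prop :=
  forall a b, proj1_sig Q a -> ~ proj1_sig Q b -> proj1_sig P (imp a b).

Definition upset (U : primeX -> Prop) : Prop :=
  forall x y, X_le x y -> U x -> U y.

Definition Simp (S : primeX -> primeX -> Prop) (U V : primeX -> Prop) : primeX -> Prop :=
  fun x => exists y, S x y /\ U y /\ ~ V y.

Definition sigmaA (a : A) : primeX -> Prop := fun P => proj1_sig P a.

End WD.

(* The embedding rests on one separation principle: if K is a preorder on a
   bounded distributive lattice extending <=, with K c d, K c e -> K c (d `&` e)
   and K c d, K c' d -> K (c `|` c') d, and K a b fails, then a maximal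
   K-closed meet-closed set containing a but not b (Zorn) is a prime filter.
   With K = <= this is the prime filter theorem, giving injectivity.  For the
   operation <-, given a <- b in P take K c d := c <- d not in P: the WD axioms
   say precisely that K satisfies the hypotheses, and a K-closed Q is exactly a
   prime filter with (P, Q) in S_A. *)

From HB Require Import structures.
From mathcomp Require Import all_boot all_order.
From mathcomp Require Import boolp classical_sets.
Import Order.TTheory.
Local Open Scope order_scope.

Section Zorn.
Local Open Scope classical_set_scope.

Lemma Zorn_bigcup_nonempty {T : Type} {P : set (set T)} {X0 : set T} :
    P X0 ->
    (forall F : set (set T), F `<=` P -> F !=set0 -> total_on F subset ->
      P (\bigcup_(X in F) X)) ->
  exists M, P M /\ forall B, M `<` B -> ~ P B.
Proof.
move=> PX0 Pchain.
have [|M [PM Mmax]] := Zorn_bigcup (P := [set X | P (X `|` X0)]).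
  move=> F FP Ftot; have [->|F0] := pselect (F = set0).
    by rewrite /= bigcup_set0 set0U.
  rewrite /= -bigcupUl; last exact/set0P/eqP.
  rewrite -(bigcup_image F (setU^~ X0) id); apply: Pchain.
  - by move=> _ [X FX <-]; exact: FP.
  - exact/image_nonempty/set0P/eqP.
  - move=> _ _ [X FX <-] [Y FY <-].
    by case: (Ftot _ _ FX FY) => XY; [left|right]; exact: setSU.
exists (M `|` X0); split => // B [MB BM] PB.
have BX0 : B `|` X0 = B by apply: setUidl => x X0x; apply: MB; right.
apply: (Mmax B); last by rewrite /= BX0.
split=> [x Mx|BsubM]; first by apply: MB; left.
by apply: BM => x /BsubM; left.
Qed.

End Zorn.

Section KSeparation.
Local Open Scope classical_set_scope.
Local Open Scope order_scope.
Context {disp : Order.disp_t} {A : tbDistrLatticeType disp}.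
Variable K : A -> A -> Prop.
Hypothesis K_le : forall x y : A, x <= y -> K x y.
Hypothesis K_trans : forall x y z : A, K x y -> K y z -> K x z.
Hypothesis K_meetr : forall x y z : A, K x y -> K x z -> K x (y `&` z).
Hypothesis K_joinl : forall x y z : A, K x z -> K y z -> K (x `|` y) z.

Definition K_closed (X : set A) := forall x y, K x y -> X x -> X y.

Lemma le_K_trans x y z : x <= y -> K y z -> K x z.
Proof. by move=> /K_le; exact: K_trans. Qed.

Variables a b : A.
Hypothesis nKab : ~ K a b.

Definition separating (X : set A) :=
  [/\ X a, ~ X b, K_closed X & forall x y, X x -> X y -> X (x `&` y)].

Lemma separating_K : separating (K a).
Proof.
split => //; first exact/K_le.
  by move=> x y Kxy Kax; exact: K_trans Kax Kxy.
exact: K_meetr.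
Qed.

Lemma separating_bigcup (F : set (set A)) :
  F `<=` separating -> F !=set0 -> total_on F subset ->
  separating (\bigcup_(X in F) X).
Proof.
move=> Fsep [X0 FX0] Ftot; split.
- by exists X0 => //; case: (Fsep _ FX0).
- by case=> X FX; case: (Fsep _ FX).
- move=> x y Kxy [X FX Xx]; exists X => //.
  by case: (Fsep _ FX) => _ _ XK _; exact: XK Xx.
move=> x y [X FX Xx] [Y FY Yy].
have [XY|YX] := Ftot _ _ FX FY.
- by exists Y => //; case: (Fsep _ FY) => _ _ _ YI; apply: YI => //; exact: XY.
- by exists X => //; case: (Fsep _ FX) => _ _ _ XI; apply: XI => //; exact: YX.
Qed.

Section MaximalSeparating.
Variable M : set A.
Hypothesis Msep : separating M.
Hypothesis Mmax : forall X, M `<` X -> ~ separating X.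

(* Otherwise the K-closure of M and z would be a larger separating set. *)
Lemma maximal_separating_avoid z :
  ~ M z -> exists2 m, M m & K (m `&` z) b.
Proof.
have [Ma Mb MK MI] := Msep.
move=> Mz; apply: contrapT => noM.
pose Mz' := [set y | exists2 m, M m & K (m `&` z) y].
have Mz'sep : separating Mz'.
  split.
  - by exists a => //; apply: K_le; exact: leIl.
  - by case=> m Mm Kmb; apply: noM; exists m.
  - by move=> x y Kxy [m Mm Kmx]; exists m => //; exact: K_trans Kmx Kxy.
  move=> x y [m Mm Kmx] [m' Mm' Kmy]; exists (m `&` m'); first exact: MI.
  apply: K_meetr.
  - by apply: le_K_trans Kmx; rewrite leI2 // leIl.
  - by apply: le_K_trans Kmy; rewrite leI2 // leIr.
apply: (Mmax Mz') Mz'sep; split=> [x Mx|Mz'M].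
  by exists x => //; apply: K_le; exact: leIl.
by apply/Mz/Mz'M; exists a => //; apply: K_le; exact: leIr.
Qed.

Lemma maximal_separating_prime : prime_filter M.
Proof.
have [Ma Mb MK MI] := Msep.
have Mle x y : x <= y -> M x -> M y by move/K_le; exact: MK.
split => //.
- exact: Mle (lex1 a) Ma.
- by move=> Mbot; apply/Mb/(Mle _ _ (le0x b)).
move=> x y Mxy; apply: contrapT => /not_orP[/maximal_separating_avoid[m Mm Kmx]].
move=> /maximal_separating_avoid[m' Mm' Kmy]; apply: Mb.
apply: (MK ((m `&` m') `&` (x `|` y))); last exact: MI (MI _ _ Mm Mm') Mxy.
rewrite meetUr; apply: K_joinl.
- by apply: le_K_trans Kmx; rewrite leI2 // leIl.
- by apply: le_K_trans Kmy; rewrite leI2 // leIr.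
Qed.

End MaximalSeparating.

Theorem prime_filter_separation :
  exists Q : set A, [/\ prime_filter Q, Q a, ~ Q b & K_closed Q].
Proof.
have [M [Msep Mmax]] := Zorn_bigcup_nonempty separating_K separating_bigcup.
have [Ma Mb MK _] := Msep.
by exists M; split => //; exact: maximal_separating_prime.
Qed.

End KSeparation.

Section Representation.
Context {disp : Order.disp_t} {A : tbDistrLatticeType disp}.

Lemma sigmaA_upset (a : A) : upset (sigmaA a).
Proof. by move=> P Q; apply. Qed.

Lemma prime_filter_le_separation (a b : A) :
  ~ a <= b -> exists P : primeX, sigmaA a P /\ ~ sigmaA b P.
Proof.
move=> nab.
have [||||Q [Qprime Qa Qb _]] :=
  prime_filter_separation (fun x y : A => x <= y) _ _ _ _ a b nab.
- by [].
- by move=> x y z; exact: le_trans.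
- by move=> x y z xy xz; rewrite lexI xy xz.
- by move=> x y z xz yz; rewrite leUx xz yz.
by exists (exist _ Q Qprime).
Qed.

Lemma sigmaA_subset_le (a b : A) :
  (forall P, sigmaA a P -> sigmaA b P) -> a <= b.
Proof.
move=> sab; apply: contrapT => /prime_filter_le_separation[P [Pa Pb]].
exact/Pb/sab.
Qed.

Lemma sigmaA_inj : injective (@sigmaA _ A).
Proof.
move=> a b eq_ab; apply: le_anti.
by rewrite !sigmaA_subset_le // => P; rewrite eq_ab.
Qed.

Lemma sigmaAI (a b : A) :
  sigmaA (a `&` b) = (fun P => sigmaA a P /\ sigmaA b P).
Proof.
apply/funext => P; have [_ Pup PI _ _] := proj2_sig P; apply/propext.
split=> [Pab|[]]; last exact: PI.
by split; apply: Pup Pab; [exact: leIl | exact: leIr].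
Qed.

Lemma sigmaAU (a b : A) :
  sigmaA (a `|` b) = (fun P => sigmaA a P \/ sigmaA b P).
Proof.
apply/funext => P; have [_ Pup _ _ Pprime] := proj2_sig P; apply/propext.
split=> [|[]]; first exact: Pprime.
  by apply: Pup; exact: leUl.
by apply: Pup; exact: leUr.
Qed.

Lemma sigmaA0 : sigmaA (\bot : A) = (fun _ => False).
Proof. by apply/funext => P; have [_ _ _ Pbot _] := proj2_sig P; apply/propext. Qed.

Lemma sigmaA1 : sigmaA (\top : A) = (fun _ => True).
Proof. by apply/funext => P; have [Ptop _ _ _ _] := proj2_sig P; apply/propext. Qed.

Variable imp : A -> A -> A.
Hypothesis hWD : WD_axioms imp.

Lemma imp_le_bot (a b : A) : a <= b -> imp a b = \bot.
Proof.
have [imp_xx imp_joinl _ _] := hWD.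
move=> /join_idPr ab; apply/eqP; rewrite -lex0 -(imp_xx b).
by rewrite -{2}ab imp_joinl leUl.
Qed.

Lemma S_rel_witness (P : primeX) (a b : A) :
  sigmaA (imp a b) P ->
  exists Q : primeX, [/\ S_rel imp P Q, sigmaA a Q & ~ sigmaA b Q].
Proof.
move=> Pab; have [_ Pup _ Pbot Pprime] := proj2_sig P.
have [_ imp_joinl imp_meetr imp_trans] := hWD.
pose K c d := ~ sigmaA (imp c d) P.
have [||||Q [Qprime Qa Qb QK]] :=
  prime_filter_separation K _ _ _ _ a b (fun nPab => nPab Pab).
- by move=> x y /imp_le_bot xy; rewrite /K xy.
- move=> x y z Kxy Kyz /(Pup _ _ (imp_trans x y z)) /Pprime[]; by [apply: Kxy | apply: Kyz].
- by move=> x y z Kxy Kxz; rewrite /K imp_meetr => /Pprime[].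
- by move=> x y z Kxz Kyz; rewrite /K imp_joinl => /Pprime[].
exists (exist _ Q Qprime); split=> // c d /= Qc Qd.
by apply: contrapT => nPcd; apply/Qd/(QK c).
Qed.

Lemma sigmaA_imp (a b : A) :
  sigmaA (imp a b) = Simp (S_rel imp) (sigmaA a) (sigmaA b).
Proof.
apply/funext => P; apply/propext; split; last by case=> Q [SPQ [Qa Qb]]; exact: SPQ.
by move=> /S_rel_witness[Q [SPQ Qa Qb]]; exists Q.
Qed.

End Representation.

Theorem theorem3p12 (disp : Order.disp_t) (A : tbDistrLatticeType disp)
    (imp : A -> A -> A) (hWD : WD_axioms imp) :
  (* sigma_A maps into Up(X(A)) *)
  (forall a : A, upset (sigmaA a)) /\
  (* injective *)
  (forall a b : A, sigmaA a = sigmaA b -> a = b) /\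
  (* homomorphism into A(F(A)) = (Up(X), cap, cup, <=_S, emptyset, X) *)
  (forall a b : A, sigmaA (a `&` b) = (fun x => sigmaA a x /\ sigmaA b x)) /\
  (forall a b : A, sigmaA (a `|` b) = (fun x => sigmaA a x \/ sigmaA b x)) /\
  (forall a b : A, sigmaA (imp a b) = Simp (S_rel imp) (sigmaA a) (sigmaA b)) /\
  sigmaA (\bot : A) = (fun _ => False) /\
  sigmaA (\top : A) = (fun _ => True).
Proof.
split; first exact: sigmaA_upset.
split; first exact: sigmaA_inj.
split; first exact: sigmaAI.
split; first exact: sigmaAU.
split; first exact: sigmaA_imp.
by split; [exact: sigmaA0 | exact: sigmaA1].
Qed.
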